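(* Let $m,a,b,n$ be positive integers with $n\ge 3$ and $(3m+1)/2\le a<b\le (5m-1)/3$. Let $A\subset\mathbb N_+$ with $|A|=n-1$, $\min A=a$, $\max A=b$, such that the sums $x_1+\dots+x_h$, over all $h\in\{1,2,3\}$ and all multisets $\{x_1,\dots,x_h\}$ of elements of $A$, are pairwise distinct modulo $m$. Let $S=\langle\{m\}\cup A\rangle_{4m}$. Then $W(S)\ge 9$; in particular $S$ satisfies Wilf's conjecture.
   Context: $\mathbb N=\{0,1,2,\dots\}$, $\mathbb N_+=\mathbb N\setminus\{0\}$; $[x,y]=\{z\in\mathbb Z: x\le z\le y\}$. For a finite set $B$ of positive integers and a positive integer $t$, $\langle B\rangle_t=\big(\sum_{x\in B}\mathbb N x\big)\cup\{z\in\mathbb Z: z\ge t\}$; this is a numerical semigroup. A numerical semigroup is a submonoid $S\subseteq\mathbb N$ with $\mathbb N\setminus S$ finite; its conductor is $c=1+\max(\mathbb Z\setminus S)$. Let $S^*=S\setminus\{0\}$, $D=S^*+S^*$, $P=S^*\setminus D$ (primitive elements), $L=S\cap[0,c-1]$, and $W(S)=|P|\,|L|-c$. Wilf's conjecture for $S$ is the inequality $W(S)\ge 0$. *)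

From HB Require Import structures.
From mathcomp Require Import all_boot all_order all_algebra.
Set Implicit Arguments. Unset Strict Implicit. Unset Printing Implicit Defensive.

Fixpoint in_span (B : seq nat) (z : nat) : bool :=
  match B with
  | [::] => z == 0
  | x :: B' => [exists k : 'I_z.+1, (k * x <= z) && in_span B' (z - k * x)]
  end.

Definition gen_sg (B : seq nat) (t : nat) (z : nat) : bool :=
  in_span B z || (t <= z).

(* Conductor c = 1 + max (Z \ S) of S = <B>_t (0 if S = N).
   Every z >= t lies in S, so gaps are < t. *)
Definition conductor (B : seq nat) (t : nat) : nat :=
  \max_(z < t | ~~ gen_sg B t z) z.+1.

Definition primitive (S : nat -> bool) (z : nat) : bool :=
  [&& S z, 0 < z &
      ~~ [exists x : 'I_z, [&& 0 < (x : nat), S x & S (z - x)]]].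

(* |P| : every primitive element of <B>_t is < 2t+2
   (if z >= 2t+2 >= 2 then z = t' + (z - t') with t' = max t 1). *)
Definition nprim (B : seq nat) (t : nat) : nat :=
  count (primitive (gen_sg B t)) (iota 0 (2 * t + 2)).

Definition nleft (B : seq nat) (t : nat) : nat :=
  count (gen_sg B t) (iota 0 (conductor B t)).

Definition wilf (B : seq nat) (t : nat) : int :=
  ((nprim B t * nleft B t)%:Z - (conductor B t)%:Z)%R.

(* Write S = <m, A>_{4m} and k = |A|.  Since 2a > 3m, the elements of S below 4m are
   0, m, 2m, 3m and those of A, m + A, 2m + A and A + A, while 4m - 1 is a gap; hence
   c = 4m and |L| >= 4 + 3k + |A + A|.  Besides m and the elements of A, every z in
   [4m, 5m) is primitive unless its residue mod m is 0 or a residue of A, A + A or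
   A + A + A (a decomposition of z in S* + S* is jm plus at most three elements of A);
   hence |P| >= m - |A + A| - |A + A + A|.  The residues of A and of A + A + A are
   pairwise distinct and lie in [a - m, 3b - 4m], which gives 2(k + |A + A + A|) < m;
   together with |A + A| <= k^2 and |A + A + A| >= |A + A| + k - 1 an elementary
   inequality yields |P| |L| >= 4m + 9. *)

From HB Require Import structures.
From mathcomp Require Import all_boot all_order all_algebra.
From mathcomp Require Import zify.

Lemma sumn_count_mem (x : nat) (X : seq nat) :
  sumn X = count_mem x X * x + sumn [seq y <- X | y != x].
Proof.
elim: X => [|y X IH] //=; case: (eqVneq y x) => [->|ne] /=.
- by rewrite IH mulnDl mul1n addnA.
- by rewrite IH add0n addnCA.
Qed.

Lemma in_span_cons (x : nat) (B : seq nat) (z : nat) :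
  in_span (x :: B) z = [exists k : 'I_z.+1, (k * x <= z) && in_span B (z - k * x)].
Proof. by []. Qed.

Lemma in_spanP (B : seq nat) (z : nat) : all (fun x => 0 < x) B ->
  reflect (exists2 X : seq nat, {subset X <= B} & sumn X = z) (in_span B z).
Proof.
elim: B z => [|x B IH] z /=.
  move=> _; apply: (iffP eqP) => [->|[[|y X] sXB <-] //]; first by exists [::].
  by have := sXB y (mem_head _ _).
case/andP=> x_gt0 B_gt0; apply: (iffP existsP).
  case=> k /andP[kx /(IH _ B_gt0)[X sXB sumX]].
  exists (nseq k x ++ X); last by rewrite sumn_cat sumn_nseq sumX mulnC subnKC.
  move=> y; rewrite mem_cat => /orP[/nseqP[-> _]|/sXB yB]; rewrite inE ?eqxx ?yB ?orbT //.
case=> X sXB sumX; have sum_split := sumn_count_mem x X; rewrite sumX in sum_split.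
have k_lt : count_mem x X < z.+1.
  by rewrite ltnS sum_split (leq_trans (leq_pmulr _ x_gt0)) ?leq_addr.
exists (Ordinal k_lt); rewrite /= sum_split leq_addr addKn.
apply/IH => //; exists [seq y <- X | y != x] => // y.
by rewrite mem_filter => /andP[yx /sXB]; rewrite inE (negbTE yx).
Qed.

Lemma sumn_range (a b : nat) (X : seq nat) : {in X, forall x, a <= x <= b} ->
  size X * a <= sumn X <= size X * b.
Proof.
elim: X => [|x X IH] //= hX.
have /andP[ax xb] := hX x (mem_head _ _).
have /andP[] := IH (fun y yX => hX y (mem_behead (s := x :: X) yX)).
lia.
Qed.

Lemma modn_between (m k u : nat) : k * m <= u < k * m + m -> u %% m = u - k * m.
Proof.
move=> u_rng; have -> : u = k * m + (u - k * m) by lia.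
rewrite modnMDl modn_small; lia.
Qed.

Lemma map_modn_iota (m k : nat) : [seq z %% m | z <- iota (k * m) m] = iota 0 m.
Proof.
rewrite -[k * m]addn0 iotaDl -map_comp -[RHS]map_id; apply/eq_in_map => r.
by rewrite mem_iota add0n /= modnMDl => /modn_small.
Qed.

Lemma cat_uniq_lt (s1 s2 : seq nat) (c : nat) : uniq s1 -> uniq s2 ->
  {in s1, forall x, x < c} -> {in s2, forall y, c <= y} -> uniq (s1 ++ s2).
Proof.
move=> u1 u2 h1 h2; rewrite cat_uniq u1 u2 andbT /=.
by apply/hasPn => z /h2 cz; apply/negP => /h1; rewrite ltnNge cz.
Qed.

Lemma sub_in_count (T : eqType) (p q : pred T) (s : seq T) :
  {in s, subpred p q} -> count p s <= count q s.
Proof.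
move=> spq; rewrite -(@eq_in_count _ [predI p & mem s]) => [|x xs]; last first.
  by rewrite /= xs andbT.
by apply: sub_count => x /andP[px /spq]; apply.
Qed.

Lemma uniq_leq_count_iota (p : pred nat) (lo N : nat) (s : seq nat) :
  uniq s -> {in s, forall z, lo <= z < lo + N /\ p z} -> size s <= count p (iota lo N).
Proof.
move=> s_uniq hs; rewrite -size_filter; apply: uniq_leq_size => // z /hs[zN pz].
by rewrite mem_filter pz mem_iota zN.
Qed.

Lemma leq_size_uniq_interval (s : seq nat) (lo hi : nat) :
  uniq s -> {in s, forall z, lo <= z <= hi} -> size s <= hi.+1 - lo.
Proof.
move=> s_uniq hs; rewrite -(size_iota lo (hi.+1 - lo)); apply: uniq_leq_size => // z.
by move/hs; rewrite mem_iota; lia.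
Qed.

Lemma leq_count_residues_notin (H : seq nat) (m k : nat) :
  m - size H <= count (fun z => z %% m \notin H) (iota (k * m) m).
Proof.
rewrite -(count_map (modn^~ m) (predC (mem H))) map_modn_iota.
rewrite -[m in m - _](size_iota 0 m) -(count_predC (mem H)) leq_subLR leq_add2r.
rewrite -size_filter; apply: leq_trans (size_undup H).
apply: uniq_leq_size; first exact/filter_uniq/iota_uniq.
by move=> r; rewrite mem_filter mem_undup => /andP[].
Qed.

Lemma conductor_eq_of_gap (B : seq nat) (t : nat) :
  0 < t -> ~~ gen_sg B t t.-1 -> conductor B t = t.
Proof.
move=> t_gt0 gap; apply/eqP; rewrite eqn_leq; apply/andP; split.
  by apply/bigmax_leqP => i _; exact: ltn_ord.
have t1_lt : t.-1 < t by rewrite ltn_predL.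
have := @leq_bigmax_cond _ (fun i : 'I_t => ~~ gen_sg B t i) (fun i => i.+1)
  (Ordinal t1_lt) gap.
by rewrite /= prednK.
Qed.

Definition sumset (X Y : seq nat) : seq nat := undup [seq x + y | x <- X, y <- Y].

Lemma sumsetP (X Y : seq nat) (z : nat) :
  reflect (exists x y, [/\ x \in X, y \in Y & z = x + y]) (z \in sumset X Y).
Proof.
rewrite mem_undup; apply: (iffP allpairsP) => [[[x y] /= [xX yY ->]]|[x [y [xX yY ->]]]].
- by exists x, y.
- by exists (x, y).
Qed.

Lemma mem_sumset (X Y : seq nat) (x y : nat) : x \in X -> y \in Y -> x + y \in sumset X Y.
Proof. by move=> xX yY; apply/sumsetP; exists x, y. Qed.

Lemma sumset_uniq (X Y : seq nat) : uniq (sumset X Y).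
Proof. exact: undup_uniq. Qed.

Lemma size_sumset_le (X Y : seq nat) : size (sumset X Y) <= size X * size Y.
Proof. by rewrite (leq_trans (size_undup _)) ?size_allpairs. Qed.

(* The sums a + Y lie strictly below the sums (X \ {a}) + c. *)
Lemma size_sumset_ge (X Y : seq nat) (a c : nat) :
  uniq X -> uniq Y -> a \in X -> c \in Y ->
  {in X, forall x, a <= x} -> {in Y, forall y, y <= c} ->
  size X + size Y <= (size (sumset X Y)).+1.
Proof.
move=> X_uniq Y_uniq aX cY a_min c_max.
have X_gt0 : 0 < size X by case: (X) aX.
set low := map (addn a) Y; set high := map (addn c) (rem a X).
suff : size (low ++ high) <= size (sumset X Y).
  by rewrite size_cat !size_map size_rem // -(prednK X_gt0) addSn ltnS addnC.
apply: uniq_leq_size.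
- apply: (cat_uniq_lt _ _ (a + c).+1).
  + by rewrite map_inj_uniq //; exact: addnI.
  + by rewrite map_inj_uniq ?rem_uniq //; exact: addnI.
  + by move=> z /mapP[y /c_max yc ->]; lia.
  + move=> z /mapP[x]; rewrite (mem_rem_uniq _ X_uniq) inE => /andP[xa /a_min ax] ->.
    by rewrite addnC ltn_add2l ltn_neqAle eq_sym xa.
- move=> z; rewrite mem_cat => /orP[] /mapP[w wXY ->]; first exact: mem_sumset.
  by rewrite addnC mem_sumset // (mem_rem wXY).
Qed.

Lemma wilf_arith (k r2 r3 m : nat) : 2 <= k -> r2 <= k * k -> r2 + k - 1 <= r3 ->
  2 * (k + r3) + 1 <= m -> 4 * m + 9 <= (m - r2 - r3) * (4 + 3 * k + r2).
Proof.
move=> k_ge2 r2_le r3_ge m_ge.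
set e := r3 - (r2 + k - 1); set f := m - (2 * (k + r3) + 1).
have -> : m = 2 * (k + r3) + 1 + f by lia.
have -> : r3 = r2 + k - 1 + e by lia.
have -> : 2 * (k + (r2 + k - 1 + e)) + 1 + f - r2 - (r2 + k - 1 + e) = 3 * k + e + f by lia.
nia.
Qed.

Definition sums3_distinct_mod (m : nat) (A : seq nat) : Prop :=
  forall X Y : seq nat, all (fun x => x \in A) X -> all (fun x => x \in A) Y ->
    1 <= size X <= 3 -> 1 <= size Y <= 3 -> ~~ perm_eq X Y -> sumn X != sumn Y %[mod m].

Section WilfBound.

Variables (m a b : nat) (A : seq nat).
Hypothesis A_range : {in A, forall x, a <= x <= b}.
Hypothesis lt_3m_2a : 3 * m < 2 * a.
Hypothesis lt_ab : a < b.
Hypothesis lt_3b_5m : 3 * b < 5 * m.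

Local Notation Sg := (gen_sg (m :: A) (4 * m)).
Local Notation A2 := (sumset A A).
Local Notation A3 := (sumset A (sumset A A)).

Lemma A_gt0 : all (fun x => 0 < x) A.
Proof. by apply/allP => x /A_range; lia. Qed.

Lemma sumn_sub_range (X : seq nat) : {subset X <= A} ->
  size X * a <= sumn X <= size X * b.
Proof. by move=> sXA; apply: sumn_range => x /sXA /A_range. Qed.

Lemma mem_sg (j : nat) (X : seq nat) : {subset X <= A} -> Sg (j * m + sumn X).
Proof.
move=> sXA; apply/orP; left; rewrite in_span_cons; apply/existsP.
have m_gt0 : 0 < m by lia.
have j_lt : j < (j * m + sumn X).+1.
  by rewrite ltnS (leq_trans (leq_pmulr j m_gt0)) ?leq_addr.
exists (Ordinal j_lt); apply/andP; split; first exact: leq_addr.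
by rewrite addKn; apply/(in_spanP _ _ A_gt0); exists X.
Qed.

Lemma mem_sg_mul (j : nat) : Sg (j * m).
Proof. by rewrite -[j * m]addn0; apply: (mem_sg j [::]). Qed.

Lemma mem_sg_shift (j x : nat) : x \in A -> Sg (j * m + x).
Proof.
move=> xA; rewrite -[x]addn0; apply: (mem_sg j [:: x]) => y.
by rewrite inE => /eqP->.
Qed.

Lemma mem_sg_A2 (v : nat) : v \in A2 -> Sg v.
Proof.
case/sumsetP=> x [y [xA yA ->]]; have := mem_sg 0 [:: x; y]; rewrite /= addn0; apply.
by move=> z; rewrite !inE => /orP[] /eqP->.
Qed.

Lemma sg_below_4m (z : nat) : Sg z -> z < 4 * m ->
  exists j (X : seq nat), {subset X <= A} /\ z = j * m + sumn X.
Proof.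
rewrite /gen_sg in_span_cons => /orP[|]; last lia.
case/existsP=> j /andP[jm /(in_spanP _ _ A_gt0)[X sXA sumX]].
by exists j, X; rewrite sumX subnKC.
Qed.

Lemma sg_ge_m (x : nat) : Sg x -> 0 < x -> m <= x.
Proof.
move=> Sx x_gt0; case: (ltnP x (4 * m)) => [x_lt|]; last lia.
have [[|j] [X [sXA ex]]] := sg_below_4m _ Sx x_lt; last by rewrite ex mulSn; lia.
case: X sXA ex => [|y X] sXA ex; first by rewrite ex in x_gt0.
have := A_range _ (sXA y (mem_head _ _)); rewrite ex /=; lia.
Qed.

Lemma sg_gap : ~~ Sg (4 * m).-1.
Proof.
apply/negP => /sg_below_4m[|j [X [sXA e]]]; first lia.
have m_gt0 : 0 < m by lia.
have j_lt4 : j < 4 by rewrite -(ltn_pmul2r m_gt0); lia.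
have X_lt3 : size X < 3.
  rewrite ltnNge; apply/negP => X_ge3; have := sumn_sub_range _ sXA.
  have : 3 * a <= size X * a by rewrite leq_mul2r X_ge3 orbT.
  lia.
move: e (sumn_sub_range _ sXA) X_lt3 j_lt4.
by case: (size X) => [|[|[|s]]]; case: j => [|[|[|[|j]]]]; lia.
Qed.

Lemma conductor_sg : conductor (m :: A) (4 * m) = 4 * m.
Proof. by apply: (conductor_eq_of_gap _ _ _ sg_gap); lia. Qed.

Lemma A2_range : {in A2, forall v, 2 * a <= v <= 2 * b}.
Proof. by move=> v /sumsetP[x [y [/A_range xr /A_range yr ->]]]; lia. Qed.

Lemma A3_range : {in A3, forall v, 3 * a <= v <= 3 * b}.
Proof. by move=> v /sumsetP[x [y [/A_range xr /A2_range yr ->]]]; lia. Qed.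

Lemma nleft_sg_ge : uniq A -> 4 + 3 * size A + size A2 <= nleft (m :: A) (4 * m).
Proof.
move=> A_uniq; rewrite /nleft conductor_sg.
rewrite [X in iota _ X](_ : 4 * m = m + m + m + m); last lia.
have -> : 4 + 3 * size A + size A2 = 1 + (size A).+1 + (size A).+1 + (size A2 + size A).+1.
  by lia.
rewrite !iotaD !count_cat; repeat apply: leq_add.
- apply: (uniq_leq_count_iota _ _ _ [:: 0]) => // z; rewrite inE => /eqP->.
  by split; [lia | exact: mem_sg_mul 0].
- apply: (uniq_leq_count_iota _ _ _ (m :: A)).
    by rewrite /= A_uniq andbT; apply/negP => /A_range; lia.
  move=> z; rewrite inE => /predU1P[->|zA].
    by split; [lia | have := mem_sg_mul 1; rewrite mul1n].
  by split; [have := A_range _ zA; lia | have := mem_sg_shift 0 z zA; rewrite mul0n add0n].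
- rewrite -(size_map (addn m)).
  apply: (uniq_leq_count_iota _ _ _ (2 * m :: map (addn m) A)).
    rewrite /= map_inj_uniq ?A_uniq ?andbT; last exact: addnI.
    by apply/negP => /mapP[x /A_range]; lia.
  move=> z; rewrite inE => /predU1P[->|/mapP[x xA ->]].
    by split; [lia | exact: mem_sg_mul 2].
  by split; [have := A_range _ xA; lia | have := mem_sg_shift 1 x xA; rewrite mul1n].
- rewrite -(size_map (addn (2 * m)) A) -size_cat.
  apply: (uniq_leq_count_iota _ _ _ (3 * m :: A2 ++ map (addn (2 * m)) A)).
    rewrite cons_uniq; apply/andP; split.
      by rewrite mem_cat; apply/negP => /orP[/A2_range|/mapP[x /A_range]]; lia.
    apply: (cat_uniq_lt _ _ (2 * b).+1); rewrite ?sumset_uniq //.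
    + by rewrite map_inj_uniq //; exact: addnI.
    + by move=> v /A2_range; lia.
    + by move=> v /mapP[x /A_range]; lia.
  move=> z; rewrite inE mem_cat => /predU1P[->|/orP[zA2|/mapP[x xA ->]]].
  + by split; [lia | exact: mem_sg_mul 3].
  + by split; [have := A2_range _ zA2; lia | exact: mem_sg_A2].
  + by split; [have := A_range _ xA; lia | exact: mem_sg_shift 2 x xA].
Qed.

Lemma primitive_sg_generator (y : nat) : y \in m :: A -> primitive Sg y.
Proof.
move=> yA; have y_rng : m <= y < 2 * m by case/predU1P: yA => [->|/A_range]; lia.
apply/and3P; split; [|lia|].
- case/predU1P: yA => [->|yA]; first by have := mem_sg_mul 1; rewrite mul1n.
  by have := mem_sg_shift 0 y yA; rewrite mul0n add0n.
- apply/existsP => -[x /and3P[x_gt0 Sx Syx]].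
  have := sg_ge_m _ Sx x_gt0; have := sg_ge_m _ Syx; have := ltn_ord x; lia.
Qed.

Lemma sumn_le3_mem (X : seq nat) : {subset X <= A} -> size X <= 3 ->
  sumn X \in 0 :: A ++ A2 ++ A3.
Proof.
move=> /allP; case: X => [|x [|y [|z [|? ?]]]] //=; rewrite ?addn0 inE !mem_cat.
- by case/andP=> xA _ _; rewrite xA orbT.
- by case/and3P=> xA yA _ _; rewrite mem_sumset ?orbT.
- case/and4P=> xA yA zA _ _.
  by rewrite (mem_sumset _ _ _ _ xA (mem_sumset _ _ _ _ yA zA)) !orbT.
Qed.

Lemma primitive_sg_residue (z : nat) : 4 * m <= z < 5 * m ->
  z %% m \notin [seq x %% m | x <- 0 :: A ++ A2 ++ A3] -> primitive Sg z.
Proof.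
move=> z_rng zH; apply/and3P; split; [by apply/orP; right; lia | lia |].
apply/existsP => -[x /and3P[x_gt0 Sx Szx]]; case/negP: zH.
have x_lt : x < z := ltn_ord x.
have x_ge := sg_ge_m _ Sx x_gt0.
have zx_ge : m <= z - x by apply: sg_ge_m Szx _; lia.
have x_lt4 : x < 4 * m by lia.
have zx_lt4 : z - x < 4 * m by lia.
have [j1 [X1 [sX1 e1]]] := sg_below_4m _ Sx x_lt4.
have [j2 [X2 [sX2 e2]]] := sg_below_4m _ Szx zx_lt4.
have sX : {subset X1 ++ X2 <= A} by move=> y; rewrite mem_cat => /orP[/sX1|/sX2].
have ez : z = (j1 + j2) * m + sumn (X1 ++ X2) by rewrite sumn_cat mulnDl; lia.
have X_le3 : size (X1 ++ X2) <= 3.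
  rewrite leqNgt; apply/negP => X_ge4; have := sumn_sub_range _ sX.
  have : 4 * a <= size (X1 ++ X2) * a by rewrite leq_mul2r X_ge4 orbT.
  lia.
by rewrite ez modnMDl; apply: (map_f (modn^~ m)); apply: sumn_le3_mem.
Qed.

Lemma nprim_sg_ge : uniq A ->
  (size A).+1 + (m - (size A + size A2 + size A3).+1) <= nprim (m :: A) (4 * m).
Proof.
move=> A_uniq; rewrite /nprim.
rewrite [X in iota _ X](_ : 2 * (4 * m) + 2 = 4 * m + m + (3 * m + 2)); last lia.
rewrite iotaD iotaD !count_cat add0n; apply: (leq_trans _ (leq_addr _ _)); apply: leq_add.
- apply: (uniq_leq_count_iota _ _ _ (m :: A)).
    by rewrite /= A_uniq andbT; apply/negP => /A_range; lia.
  move=> y yA; split; last exact: primitive_sg_generator.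
  by case/predU1P: yA => [->|/A_range]; lia.
- set H := [seq x %% m | x <- 0 :: A ++ A2 ++ A3].
  have -> : (size A + size A2 + size A3).+1 = size H by rewrite size_map /= !size_cat addnA.
  apply: leq_trans (leq_count_residues_notin H m 4) _.
  apply: sub_in_count => z; rewrite mem_iota => z_rng.
  by apply: primitive_sg_residue; lia.
Qed.

Lemma modn_inj_in_A_A3 : sums3_distinct_mod m A -> {in A ++ A3 &, injective (modn^~ m)}.
Proof.
move=> distinct.
have sum_repr u : u \in A ++ A3 ->
    exists X, [/\ all (fun x => x \in A) X, 1 <= size X <= 3 & sumn X = u].
  rewrite mem_cat => /orP[uA|/sumsetP[x [_ [xA /sumsetP[y [z [yA zA ->]]] ->]]]].
  - by exists [:: u]; rewrite /= uA addn0.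
  - by exists [:: x; y; z]; rewrite /= xA yA zA addn0.
move=> u v /sum_repr[X [XA X_size <-]] /sum_repr[Y [YA Y_size <-]] /eqP eq_mod.
apply: contraTeq eq_mod => neq; apply: distinct => //.
by apply: contra neq => /perm_sumn->.
Qed.

Lemma size_A_A3_le : uniq A -> {in A ++ A3 &, injective (modn^~ m)} ->
  size A + size A3 <= 3 * b - 3 * m - a + 1.
Proof.
move=> A_uniq mod_inj; set s := [seq u %% m | u <- A ++ A3].
have s_uniq : uniq s.
  rewrite map_inj_in_uniq // (cat_uniq_lt _ _ b.+1) ?sumset_uniq //.
  - by move=> x /A_range; lia.
  - by move=> v /A3_range; lia.
have s_range : {in s, forall r, a - m <= r <= 3 * b - 4 * m}.
  move=> r /mapP[u]; rewrite mem_cat => /orP[/A_range u_rng | /A3_range u_rng] ->.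
  - by rewrite (modn_between m 1 u); lia.
  - by rewrite (modn_between m 4 u); lia.
have := leq_size_uniq_interval s (a - m) (3 * b - 4 * m) s_uniq s_range.
rewrite size_map size_cat; lia.
Qed.

Lemma wilf_sg_ge9 : uniq A -> 2 <= size A -> a \in A -> b \in A ->
  sums3_distinct_mod m A -> (9 <= wilf (m :: A) (4 * m))%R.
Proof.
move=> A_uniq A_ge2 aA bA distinct.
have A2_le := size_sumset_le A A.
have A3_ge : size A + size A2 <= (size A3).+1.
  apply: (size_sumset_ge _ _ a (b + b)) => //.
  - exact: sumset_uniq.
  - exact: mem_sumset.
  - by move=> x /A_range/andP[].
  - by move=> v /A2_range; lia.
have res_le := size_A_A3_le A_uniq (modn_inj_in_A_A3 distinct).
have P_ge : m - size A2 - size A3 <= nprim (m :: A) (4 * m).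
  by have := nprim_sg_ge A_uniq; lia.
have A3_ge_A2 : size A2 + size A - 1 <= size A3 by lia.
have m_ge : 2 * (size A + size A3) + 1 <= m by lia.
have := leq_mul P_ge (nleft_sg_ge A_uniq).
have := wilf_arith _ _ _ _ A_ge2 A2_le A3_ge_A2 m_ge.
rewrite /wilf conductor_sg; move: (nprim _ _ * nleft _ _)%N => PL; lia.
Qed.

End WilfBound.

Theorem proposition4p1 (m a b n : nat) (A : seq nat) :
  0 < m -> 0 < a -> 0 < b -> 0 < n -> 3 <= n ->
  3 * m + 1 <= 2 * a -> a < b -> 3 * b <= 5 * m - 1 ->
  uniq A -> size A = n - 1 -> all (fun x => 0 < x) A ->
  a \in A -> b \in A -> all (fun x => a <= x <= b) A ->
  (forall X Y : seq nat,
     all (fun x => x \in A) X -> all (fun x => x \in A) Y ->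
     1 <= size X <= 3 -> 1 <= size Y <= 3 ->
     ~~ perm_eq X Y -> sumn X != sumn Y %[mod m]) ->
  (9 <= wilf (m :: A) (4 * m))%R.
Proof.
move=> _ _ _ _ n_ge3 le_3m_2a lt_ab le_3b_5m A_uniq A_size _ aA bA /allP A_range distinct.
apply: (wilf_sg_ge9 m a b A A_range) => //; lia.
Qed.
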